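(* Let $B \in M_m \otimes M_n$ (a real matrix, not necessarily symmetric). Then \[ \mu_{\min}(B) \ge W^{1+i}_{\min}(B) \quad\text{and}\quad \mu_{\max}(B) \le W^{1+i}_{\max}(B). \]
   Context: $M_n$ denotes real $n\times n$ matrices and $M_m\otimes M_n$ is identified with $M_{mn}$ via the Kronecker product. For $A = \sum_j X_j \otimes Y_j \in M_m\otimes M_n$, the partial transpose is the linear map $A^\Gamma = \sum_j X_j \otimes Y_j^T$. For $B \in M_m\otimes M_n$, $\mu_{\min}(B) = \min\{(\mathbf{v}\otimes\mathbf{w})^T B(\mathbf{v}\otimes\mathbf{w}) : \mathbf{v}\in\mathbb{R}^m,\mathbf{w}\in\mathbb{R}^n, \|\mathbf{v}\|=\|\mathbf{w}\|=1\}$ and $\mu_{\max}(B)$ is the corresponding maximum. The numerical range of a complex matrix $A\in M_N(\mathbb{C})$ is $W(A) = \{\mathbf{x}^*A\mathbf{x} : \mathbf{x}\in\mathbb{C}^N, \|\mathbf{x}\|=1\}$. Define $W^{1+i}(B) = \{c\in\mathbb{R} : c(1+i) \in W(B + iB^\Gamma)\}$; this is a nonempty compact interval, and $W^{1+i}_{\min}(B)$, $W^{1+i}_{\max}(B)$ denote its minimum and maximum. *)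

From HB Require Import structures.
From mathcomp Require Import all_boot all_order all_algebra.
From mathcomp Require Import classical_sets reals.
From mathcomp Require Import complex mxtens.

Set Implicit Arguments.
Unset Strict Implicit.
Unset Printing Implicit Defensive.

Import Order.TTheory GRing.Theory Num.Theory.
Local Open Scope ring_scope.
Local Open Scope classical_set_scope.

(* M_m (x) M_n is identified with 'M_(m*n) via the Kronecker product:
   the row/column index (i,k) in 'I_m * 'I_n corresponds to i*n + k
   (mxtens_index), and A *t B (tensmx) is the Kronecker product. *)

(* Partial transpose: the linear map  X (x) Y |-> X (x) Y^T, applied to the
   expansion of A in Kronecker products of matrix units
   A = \sum A_{(i,k),(j,l)} E_ij (x) E_kl. *)
Definition ptrans (R : pzRingType) (m n : nat) (A : 'M[R]_(m * n)) : 'M[R]_(m * n) :=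
  \sum_(i < m) \sum_(j < m) \sum_(k < n) \sum_(l < n)
     A (mxtens_index (i, k)) (mxtens_index (j, l))
       *: tensmx (delta_mx i j) (delta_mx k l)^T.

Definition unit_rvec (R : realType) (p : nat) (v : 'cV[R]_p) : Prop :=
  \sum_(i < p) v i 0 ^+ 2 = 1.

Definition qform (R : pzRingType) (N : nat) (B : 'M[R]_N) (x : 'cV[R]_N) : R :=
  (x^T *m B *m x) 0 0.

Definition prod_values (R : realType) (m n : nat) (B : 'M[R]_(m * n)) : set R :=
  [set t | exists (v : 'cV[R]_m) (w : 'cV[R]_n),
     unit_rvec v /\ unit_rvec w /\ t = qform B (tensmx v w)].

(* mu_min / mu_max: the minimum / maximum of the above (compact) set;
   written as inf / sup, which equal min / max since the set is compact
   and nonempty for m, n >= 1. *)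
Definition mu_min (R : realType) (m n : nat) (B : 'M[R]_(m * n)) : R :=
  inf (prod_values B).
Definition mu_max (R : realType) (m n : nat) (B : 'M[R]_(m * n)) : R :=
  sup (prod_values B).

Definition numrange (R : realType) (N : nat) (A : 'M[R[i]]_N) : set R[i] :=
  [set z | exists x : 'cV[R[i]]_N,
     \sum_(k < N) `|x k 0| ^+ 2 = 1 /\
     z = ((map_mx (@conjc R) x)^T *m A *m x) 0 0].

Definition cplx_mx (R : realType) (p q : nat) (A : 'M[R]_(p, q)) : 'M[R[i]]_(p, q) :=
  map_mx (fun r : R => (r%:C)%C) A.

Definition W1i (R : realType) (m n : nat) (B : 'M[R]_(m * n)) : set R :=
  [set c | numrange (cplx_mx B + (Complex 0 1) *: cplx_mx (ptrans B))
             ((c%:C)%C * (1 + Complex 0 1))].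

(* Its minimum and maximum (it is a nonempty compact interval). *)
Definition W1i_min (R : realType) (m n : nat) (B : 'M[R]_(m * n)) : R := inf (W1i B).
Definition W1i_max (R : realType) (m n : nat) (B : 'M[R]_(m * n)) : R := sup (W1i B).

From HB Require Import structures.
From mathcomp Require Import all_boot all_order all_algebra.
From mathcomp Require Import classical_sets reals.
From mathcomp Require Import complex mxtens.
Import Order.TTheory GRing.Theory Num.Theory.
Local Open Scope ring_scope.
Local Open Scope classical_set_scope.

(* For a product vector x = v (x) w the quadratic forms of B and
   of its partial transpose B^Gamma coincide: expanding B in the product basis
   E_ij (x) E_kl, each term becomes X (x) Y resp. X (x) Y^T, whose quadratic
   form at v (x) w is (v^T X v)(w^T Y w) resp. (v^T X v)(w^T Y^T w), and a
   quadratic form is invariant under transposition.  Hence for real unit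
   vectors v, w, the complex unit vector x = v (x) w satisfies
   x^* (B + i B^Gamma) x = q (1 + i) with q = (v (x) w)^T B (v (x) w), i.e.
   every value defining mu_min / mu_max lies in W^{1+i}(B).  Since W^{1+i}(B)
   is bounded (numerical ranges are bounded by the entrywise l^1 norm) and the
   set of product values is nonempty, the inequalities between the infima and
   suprema follow. *)

Section Quadratic.
Variable R : comPzRingType.

Lemma sum_mxtens_index (V : nmodType) m n (F : 'I_(m * n) -> V) :
  \sum_(a < m * n) F a = \sum_(i < m) \sum_(k < n) F (mxtens_index (i, k)).
Proof.
rewrite pair_big /= (reindex (@mxtens_index m n)) /=; first by apply: eq_bigr => -[].
by exists (@mxtens_unindex m n) => x _; rewrite (mxtens_indexK, mxtens_unindexK).
Qed.

Lemma delta_mx_tens m n (i j : 'I_m) (k l : 'I_n) :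
  delta_mx (mxtens_index (i, k)) (mxtens_index (j, l)) =
  delta_mx i j *t delta_mx k l :> 'M[R]_(m * n).
Proof.
apply/matrixP => a b.
case: (mxtens_indexP a) => a1 a2; case: (mxtens_indexP b) => b1 b2.
rewrite tensmxE !mxE !(inj_eq (can_inj (@mxtens_indexK m n))) !xpair_eqE.
by case: (a1 == i); case: (a2 == k); case: (b1 == j); case: (b2 == l);
  rewrite /= ?mulr1 ?mulr0 ?mul0r.
Qed.

Lemma mx_tens_expand m n (B : 'M[R]_(m * n)) :
  B = \sum_(i < m) \sum_(j < m) \sum_(k < n) \sum_(l < n)
     B (mxtens_index (i, k)) (mxtens_index (j, l)) *: (delta_mx i j *t delta_mx k l).
Proof.
rewrite {1}[B]matrix_sum_delta (@sum_mxtens_index _ m n).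
apply: eq_bigr => i _; rewrite exchange_big /= (@sum_mxtens_index _ m n).
apply: eq_bigr => j _; rewrite exchange_big /=.
by apply: eq_bigr => k _; apply: eq_bigr => l _; rewrite delta_mx_tens.
Qed.

Lemma tensmx11 (P Q : 'M[R]_1) (a b : 'I_(1 * 1)) : (P *t Q) a b = P 0 0 * Q 0 0.
Proof.
case: (mxtens_indexP a) => a1 a2; case: (mxtens_indexP b) => b1 b2.
by rewrite tensmxE [a1]ord1 [a2]ord1 [b1]ord1 [b2]ord1.
Qed.

Lemma qformD N (A C : 'M[R]_N) x : qform (A + C) x = qform A x + qform C x.
Proof. by rewrite /qform mulmxDr mulmxDl mxE. Qed.

Lemma qformZ N (c : R) (A : 'M[R]_N) x : qform (c *: A) x = c * qform A x.
Proof. by rewrite /qform -scalemxAr -scalemxAl mxE. Qed.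

Lemma qform_sum N I (r : seq I) (P : pred I) (F : I -> 'M[R]_N) x :
  qform (\sum_(i <- r | P i) F i) x = \sum_(i <- r | P i) qform (F i) x.
Proof.
apply: (big_morph (fun A => qform A x)) => [A C|]; first exact: qformD.
by rewrite /qform mulmx0 mul0mx mxE.
Qed.

Lemma qform_tr N (A : 'M[R]_N) x : qform A^T x = qform A x.
Proof.
have tr11 (M : 'M[R]_1) : M^T 0 0 = M 0 0 by rewrite mxE.
by rewrite /qform -[RHS]tr11 !trmx_mul trmxK mulmxA.
Qed.

Lemma qform_tens m n (X : 'M[R]_m) (Y : 'M[R]_n) (v : 'cV[R]_m) (w : 'cV[R]_n) :
  qform (X *t Y) (v *t w) = qform X v * qform Y w.
Proof.
by rewrite /qform (trmx_tens v w) (tensmx_mul v^T w^T X Y) (tensmx_mul (v^T *m X) (w^T *m Y) v w) tensmx11.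
Qed.

Lemma qform_ptrans_tens m n (B : 'M[R]_(m * n)) (v : 'cV[R]_m) (w : 'cV[R]_n) :
  qform (ptrans B) (v *t w) = qform B (v *t w).
Proof.
rewrite {2}[B]mx_tens_expand /ptrans !qform_sum.
apply: eq_bigr => i _; rewrite !qform_sum; apply: eq_bigr => j _.
rewrite !qform_sum; apply: eq_bigr => k _; rewrite !qform_sum; apply: eq_bigr => l _.
by rewrite !qformZ !qform_tens qform_tr.
Qed.

End Quadratic.

Lemma unit_rvecE (R : realType) p (v : 'cV[R]_p) : unit_rvec v <-> (v^T *m v) 0 0 = 1.
Proof.
rewrite /unit_rvec mxE.
by under [X in _ <-> X = _]eq_bigr do rewrite !mxE -expr2.
Qed.

Lemma unit_rvec_tens (R : realType) m n (v : 'cV[R]_m) (w : 'cV[R]_n) :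
  unit_rvec v -> unit_rvec w -> unit_rvec (v *t w).
Proof.
move=> /unit_rvecE hv /unit_rvecE hw; apply/unit_rvecE.
by rewrite (trmx_tens v w) (tensmx_mul v^T w^T v w) tensmx11 hv hw mulr1.
Qed.

Lemma unit_rvec_delta (R : realType) p (i0 : 'I_p) : unit_rvec (delta_mx i0 0 : 'cV[R]_p).
Proof.
rewrite /unit_rvec (bigD1 i0) //= big1 ?addr0 => [|i hi]; rewrite mxE ?eqxx.
  by rewrite expr1n.
by rewrite (negbTE hi) expr0n.
Qed.

Section Complexification.
Variable R : realType.
Local Open Scope complex_scope.

Lemma cplx_qform N (M : 'M[R]_N) (y : 'cV[R]_N) :
  ((map_mx conjc (cplx_mx y))^T *m cplx_mx M *m cplx_mx y) 0 0 = (qform M y)%:C.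
Proof.
have -> : map_mx conjc (cplx_mx y) = cplx_mx y.
  by apply/matrixP => a b; rewrite !mxE conjc_real.
by rewrite /cplx_mx map_trmx -!(map_mxM (real_complex R)) mxE.
Qed.

Lemma cplx_unit N (y : 'cV[R]_N) :
  unit_rvec y -> \sum_(k < N) `|cplx_mx y k 0| ^+ 2 = 1.
Proof.
move=> hy; under eq_bigr do rewrite mxE -add_Re2_Im2 /= expr0n /= addr0.
by rewrite -rmorph_sum hy.
Qed.

Lemma prod_values_sub_W1i m n (B : 'M[R]_(m * n)) : prod_values B `<=` W1i B.
Proof.
move=> _ [v [w [hv [hw ->]]]]; exists (cplx_mx (v *t w)).
split; first exact/cplx_unit/unit_rvec_tens.
rewrite mulmxDr mulmxDl -scalemxAr -scalemxAl mxE [in X in _ = _ + X]mxE.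
by rewrite !cplx_qform qform_ptrans_tens mulrDr mulr1 mulrC.
Qed.

Lemma unit_entry_le1 N (x : 'cV[R[i]]_N) a :
  \sum_(k < N) `|x k 0| ^+ 2 = 1 -> `|x a 0| <= 1.
Proof.
move=> hx; rewrite -(@expr_le1 _ 2) // -hx (bigD1 a) //= lerDl.
by apply: sumr_ge0 => k _; exact: exprn_ge0.
Qed.

Lemma numrange_norm_le N (A : 'M[R[i]]_N) z :
  numrange A z -> `|z| <= \sum_(a < N) \sum_(b < N) `|A a b|.
Proof.
move=> [x [hx ->]]; rewrite !mxE; under eq_bigr do rewrite mxE mulr_suml.
rewrite exchange_big /=; apply: le_trans (ler_norm_sum _ _ _) _.
apply: ler_sum => a _; apply: le_trans (ler_norm_sum _ _ _) _.
apply: ler_sum => b _; rewrite !normrM !mxE normcJ.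
rewrite -[X in _ <= X]mul1r -[X in _ <= X]mulr1.
apply: ler_pM; rewrite ?mulr_ge0 ?normr_ge0 ?unit_entry_le1 //.
by apply: ler_wpM2r; rewrite ?normr_ge0 ?unit_entry_le1.
Qed.

(* Consequently W^{1+i}(B) is bounded: c is the real part of c (1 + i). *)
Lemma W1i_bounded m n (B : 'M[R]_(m * n)) : exists K, forall c, W1i B c -> `|c| <= K.
Proof.
set A := cplx_mx B + 'i *: cplx_mx (ptrans B).
set S := \sum_(a < m * n) \sum_(b < m * n) `|A a b|.
have S_real : S = (complex.Re S)%:C.
  by rewrite RRe_real // ger0_real // sumr_ge0 // => a _; rewrite sumr_ge0.
exists (complex.Re S) => c /numrange_norm_le cS.
rewrite -lecR -S_real; apply: le_trans cS; apply: le_trans (normc_ge_Re _).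
by rewrite /= addr0 mulr1 mul0r subr0.
Qed.

End Complexification.

Lemma inf_sup_subset (R : realType) (S T : set R) :
  S `<=` T -> S !=set0 -> (exists K, forall c, T c -> `|c| <= K) ->
  inf T <= inf S /\ sup S <= sup T.
Proof.
move=> ST S0 [K hK].
have lT : has_lbound T by exists (- K) => c /hK; rewrite ler_norml => /andP[].
have uT : has_ubound T by exists K => c /hK; rewrite ler_norml => /andP[].
split; first by apply: lb_le_inf => // t /ST; exact: ge_inf.
by apply: ge_sup => // t /ST; exact: ub_le_sup.
Qed.

Theorem theorem3p1 (R : realType) (m n : nat) (hm : (0 < m)%N) (hn : (0 < n)%N)
    (B : 'M[R]_(m * n)) :
  W1i_min B <= mu_min B /\ mu_max B <= W1i_max B.
Proof.
apply: inf_sup_subset; [exact: prod_values_sub_W1i | | exact: W1i_bounded].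
pose v : 'cV[R]_m := delta_mx (Ordinal hm) 0.
pose w : 'cV[R]_n := delta_mx (Ordinal hn) 0.
exists (qform B (v *t w)), v, w.
by split; [exact: unit_rvec_delta | split; first exact: unit_rvec_delta].
Qed.
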